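(* Let $(V,\mathcal H,\iota,W)$ be an abelian generalized functional theory with set of weights $\Omega$. Then $\iota^*(\mathcal P)=\iota^*(\mathcal E)=\mathrm{conv}(\Omega)$.
   Context: A generalized functional theory is a tuple $(V,\mathcal H,\iota,W)$ with $V$ a finite-dimensional real vector space, $\mathcal H$ a finite-dimensional complex Hilbert space, $\iota:V\to i\mathfrak u(\mathcal H)$ a linear map into the Hermitian operators, and $W$ Hermitian. States are regarded as linear functionals on $i\mathfrak u(\mathcal H)$ via the trace; $\iota^*$ is the dual map, $\langle\iota^*(\Gamma),v\rangle=\mathrm{Tr}(\Gamma\iota(v))$. $\mathcal P$ is the set of pure states (rank-one orthogonal projectors) and $\mathcal E$ the set of density operators. The theory is abelian if $[\iota(v),\iota(v')]=0$ for all $v,v'$. A weight is an $\alpha\in V^*$ for which there is a nonzero $\psi\in\mathcal H$ with $\iota(v)\psi=\langle\alpha,v\rangle\psi$ for all $v\in V$; $\Omega$ is the set of weights. *)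

From HB Require Import structures.
From mathcomp Require Import all_boot all_order all_algebra.
From mathcomp Require Import complex.
Set Implicit Arguments. Unset Strict Implicit. Unset Printing Implicit Defensive.
Import Order.TTheory GRing.Theory Num.Theory.
Local Open Scope ring_scope.
Local Open Scope complex_scope.

(* Hilbert space H = C^n (column vectors), operators = n x n complex matrices. *)
Definition adj (R : rcfType) (n p : nat) (A : 'M[R[i]]_(n, p)) : 'M[R[i]]_(p, n) :=
  (map_mx (@conjc R) A)^T.

Definition is_hermitian (R : rcfType) (n : nat) (A : 'M[R[i]]_n) : Prop :=
  adj A = A.

(* The real vector space V is R^m (row vectors), V* is identified with R^m via
   the standard pairing <alpha, v> = sum_k alpha_k v_k. *)
Definition pairing (R : rcfType) (m : nat) (alpha v : 'rV[R]_m) : R :=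
  \sum_(k < m) alpha 0 k * v 0 k.

(* A linear map iota : V -> iu(H) is given by the images X k of the standard
   basis vectors: iota v = sum_k v_k X_k. *)
Definition iota (R : rcfType) (m n : nat) (X : 'I_m -> 'M[R[i]]_n)
  (v : 'rV[R]_m) : 'M[R[i]]_n :=
  \sum_(k < m) (v 0 k)%:C *: X k.

(* Dual map: <iota^*(G), v> = Tr(G iota(v)); its coordinates are Tr(G X_k)
   (real for is_hermitian G). *)
Definition iota_star (R : rcfType) (m n : nat) (X : 'I_m -> 'M[R[i]]_n)
  (G : 'M[R[i]]_n) : 'rV[R]_m :=
  \row_(k < m) @complex.Re R (\tr (G *m X k)).

Definition pure_state (R : rcfType) (n : nat) (P : 'M[R[i]]_n) : Prop :=
  is_hermitian P /\ P *m P = P /\ \rank P = 1%N.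

Definition density_operator (R : rcfType) (n : nat) (G : 'M[R[i]]_n) : Prop :=
  is_hermitian G /\ (forall x : 'cV[R[i]]_n, 0 <= (adj x *m G *m x) 0 0)
  /\ \tr G = 1.

Definition abelian_theory (R : rcfType) (m n : nat) (X : 'I_m -> 'M[R[i]]_n) :
  Prop := forall v v' : 'rV[R]_m, iota X v *m iota X v' = iota X v' *m iota X v.

Definition weight (R : rcfType) (m n : nat) (X : 'I_m -> 'M[R[i]]_n)
  (alpha : 'rV[R]_m) : Prop :=
  exists psi : 'cV[R[i]]_n, psi != 0 /\
    forall v : 'rV[R]_m, iota X v *m psi = (pairing alpha v)%:C *: psi.

Definition conv (R : rcfType) (m : nat) (S : 'rV[R]_m -> Prop) (x : 'rV[R]_m)
  : Prop :=
  exists (k : nat) (p : 'I_k -> 'rV[R]_m) (t : 'I_k -> R),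
    (forall j, S (p j)) /\ (forall j, 0 <= t j) /\ \sum_(j < k) t j = 1 /\
    x = \sum_(j < k) t j *: p j.

From Pilot Require Import Defs.
From mathcomp Require Import all_boot all_order all_algebra.
From mathcomp Require Import complex spectral.
Set Implicit Arguments.
Unset Strict Implicit.
Unset Printing Implicit Defensive.
Import Order.TTheory GRing.Theory Num.Theory.
Local Open Scope ring_scope.
Local Open Scope complex_scope.

(* Commuting Hermitian matrices are simultaneously unitarily diagonalisable:
   cotrigonalise them by Schur's method, and note that a triangular Hermitian
   matrix is diagonal. In a common orthonormal eigenbasis (u_j) with joint
   eigenvalues lam_j in V*, the weights are exactly the lam_j, and for a density
   operator G we get iota*(G) = sum_j <u_j, G u_j> lam_j, a convex combination.
   Conversely sum_j s_j lam_j is iota* of the pure state of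
   psi = sum_j sqrt(s_j) u_j, and every pure state is a density operator. *)

Section Adjoint.
Variable R : rcfType.

Lemma adjE n p (A : 'M[R[i]]_(n, p)) : adj A = (A ^t (@Num.conj _))%sesqui.
Proof. by rewrite /adj map_trmx. Qed.

Lemma adj_mxE n p (A : 'M[R[i]]_(n, p)) i j : adj A i j = conjc (A j i).
Proof. by rewrite /adj !mxE. Qed.

Lemma adjM n p q (A : 'M[R[i]]_(n, p)) (B : 'M[R[i]]_(p, q)) :
  adj (A *m B) = adj B *m adj A.
Proof. by rewrite /adj map_mxM trmx_mul. Qed.

Lemma adjK n p (A : 'M[R[i]]_(n, p)) : adj (adj A) = A.
Proof. by apply/matrixP => i j; rewrite !adj_mxE conjcK. Qed.

Lemma adj_delta_mx n p (i : 'I_n) (j : 'I_p) :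
  adj (delta_mx i j : 'M[R[i]]_(n, p)) = delta_mx j i.
Proof. by apply/matrixP => a b; rewrite adj_mxE !mxE rmorph_nat andbC. Qed.

Lemma adj_mul_ge0 n (y : 'cV[R[i]]_n) : 0 <= (adj y *m y) 0 0.
Proof.
rewrite mxE; apply: sumr_ge0 => i _; rewrite adj_mxE mulrC.
exact: mulcJ_ge0.
Qed.

Lemma conjc_fixed_real (z : R[i]) : conjc z = z -> z = (complex.Re z)%:C.
Proof.
case: z => a b [] /eqP; rewrite -subr_eq0 -opprD oppr_eq0 -mulr2n.
by rewrite mulrn_eq0 => /eqP ->.
Qed.

Lemma Re_mul_real (z : R[i]) (r : R) :
  complex.Re (z * r%:C) = complex.Re z * r.
Proof. by case: z => a b /=; rewrite mulr0 subr0. Qed.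

Lemma hermitian_trig_diag n (D : 'M[R[i]]_n) :
  is_hermitian D -> is_trig_mx D ->
  D = diag_mx (\row_j (complex.Re (D j j))%:C).
Proof.
move=> Dh /is_trig_mxP Dtrig; apply/matrixP => i j; rewrite !mxE.
have [<- | i_neq_j] := eqVneq i j.
  by rewrite mulr1n -conjc_fixed_real // -adj_mxE Dh.
rewrite mulr0n; case: (ltngtP i j) => [ij | ji | /val_inj ij].
- exact: Dtrig.
- by rewrite -Dh adj_mxE Dtrig ?conjc0.
- by rewrite ij eqxx in i_neq_j.
Qed.

Lemma commuting_hermitian_codiagonalization m n (X : 'I_m -> 'M[R[i]]_n) :
  (forall k, is_hermitian (X k)) -> (forall k l, X k *m X l = X l *m X k) ->
  exists (U : 'M[R[i]]_n) (lam : 'I_m -> 'I_n -> R),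
    U *m adj U = 1%:M /\
    forall k, X k = adj U *m diag_mx (\row_j (lam k j)%:C) *m U.
Proof.
move=> Xh Xcomm.
have [|U U_unitary /allP U_trig] :=
    @cotrigonalization _ n [seq X k | k <- enum 'I_m].
  by move=> _ _ /mapP[k _ ->] /mapP[l _ ->]; apply: Xcomm.
have UU : U *m adj U = 1%:M by rewrite adjE; apply/unitarymxP.
pose D k := U *m X k *m adj U.
have Dh k : is_hermitian (D k) by rewrite /is_hermitian /D !adjM adjK Xh mulmxA.
have D_trig k : is_trig_mx (D k).
  have := U_trig _ (map_f _ (mem_enum _ k)).
  by rewrite inE /similar_to (conjymx _ U_unitary) -adjE.
exists U, (fun k j => complex.Re (D k j j)); split => // k.
rewrite -hermitian_trig_diag // /D !mulmxA (mulmx1C UU) mul1mx.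
by rewrite -mulmxA (mulmx1C UU) mulmx1.
Qed.

End Adjoint.

Lemma mxtrace_idempotent (F : fieldType) n (P : 'M[F]_n) :
  P *m P = P -> \tr P = (\rank P)%:R.
Proof.
move=> PP; have ab : col_base P *m row_base P = P := mulmx_base P.
have b_free : row_free (row_base P) := row_base_free P.
have aT_free : row_free (col_base P)^T.
  by rewrite /row_free mxrank_tr; apply: col_base_full.
move: (col_base P) (row_base P) ab b_free aT_free => a b ab b_free aT_free.
have aba : a *m (b *m a) *m b = a *m 1%:M *m b.
  by rewrite mulmx1 !mulmxA ab -mulmxA ab PP.
have ba : b *m a = 1%:M.
  apply: trmx_inj; apply: (row_free_inj aT_free).
  by rewrite -!trmx_mul (row_free_inj b_free aba).
by rewrite -{1}ab mxtrace_mulC ba mxtrace1.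
Qed.

Lemma mxtrace_mul_diag (S : pzSemiRingType) n (M : 'M[S]_n) d :
  \tr (M *m diag_mx d) = \sum_j M j j * d 0 j.
Proof. by apply: eq_bigr => j _; rewrite mul_mx_diag mxE. Qed.

Lemma delta_mx_quad (S : pzSemiRingType) n (A : 'M[S]_n) j :
  (delta_mx 0 j *m A *m delta_mx j 0 : 'M_1) 0 0 = A j j.
Proof. by rewrite -rowE -colE !mxE. Qed.

Section States.
Variable R : rcfType.

Lemma pure_state_density_operator n (P : 'M[R[i]]_n) :
  pure_state P -> density_operator P.
Proof.
case=> Ph [PP P_rank]; split; [done | split].
- move=> x; have -> : adj x *m P *m x = adj (P *m x) *m (P *m x).
    by rewrite adjM Ph !mulmxA -(mulmxA _ P P) PP.
  exact: adj_mul_ge0.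
- by rewrite mxtrace_idempotent // P_rank.
Qed.

Lemma unit_vector_pure_state n (psi : 'cV[R[i]]_n) :
  adj psi *m psi = 1%:M -> pure_state (psi *m adj psi).
Proof.
move=> psi1; split; first by rewrite /is_hermitian adjM adjK.
split; first by rewrite !mulmxA -(mulmxA psi) psi1 mulmx1.
apply/eqP; rewrite eqn_leq (leq_trans (mxrankM_maxl _ _) (rank_leq_col _)) /=.
rewrite lt0n mxrank_eq0; apply/eqP => P0.
have psi0 : psi = 0 by rewrite -(mulmx1 psi) -psi1 mulmxA P0 mul0mx.
move/matrixP: psi1 => /(_ 0 0); rewrite psi0 mulmx0 !mxE eqxx => /eqP.
by rewrite eq_sym oner_eq0.
Qed.

End States.

Section Weights.
Variables (R : rcfType) (m n : nat) (X : 'I_m -> 'M[R[i]]_n).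

Lemma iota_delta_mx k : Defs.iota X (delta_mx 0 k) = X k.
Proof.
rewrite /Defs.iota (bigD1 k) //= big1 ?mxE ?eqxx ?scale1r ?addr0 //.
move=> l /negbTE lk.
by rewrite mxE lk scale0r.
Qed.

Lemma pairing_delta_mx (a : 'rV[R]_m) k : pairing a (delta_mx 0 k) = a 0 k.
Proof.
rewrite /pairing (bigD1 k) //= big1 ?mxE ?eqxx ?mulr1 ?addr0 //.
move=> l /negbTE lk.
by rewrite mxE lk mulr0.
Qed.

Lemma abelian_theory_comm :
  abelian_theory X -> forall k l, X k *m X l = X l *m X k.
Proof. by move=> Xab k l; rewrite -!iota_delta_mx Xab. Qed.

Variables (U : 'M[R[i]]_n) (lam : 'I_m -> 'I_n -> R).
Hypothesis U_unitary : U *m adj U = 1%:M.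
Hypothesis X_diag : forall k, X k = adj U *m diag_mx (\row_j (lam k j)%:C) *m U.

Definition eigenrow j : 'rV[R]_m := \row_k lam k j.
Definition eigenvector j : 'cV[R[i]]_n := adj U *m delta_mx j 0.

Lemma X_eigenvector k j : X k *m eigenvector j = (lam k j)%:C *: eigenvector j.
Proof.
rewrite X_diag /eigenvector -!mulmxA (mulmxA U) U_unitary mul1mx.
have -> : diag_mx (\row_j (lam k j)%:C) *m delta_mx j 0 =
          (lam k j)%:C *: delta_mx j (0 : 'I_1).
  apply/matrixP => a b; rewrite mul_diag_mx !mxE.
  by case: (eqVneq a j) => [-> | ]; rewrite ?mulr1 ?mulr0.
by rewrite -scalemxAr.
Qed.

Lemma weight_eigenrow j : weight X (eigenrow j).
Proof.
exists (eigenvector j); split.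
  apply/eqP => /(congr1 (mulmx U)).
  rewrite mulmxA U_unitary mul1mx mulmx0 => /matrixP /(_ j 0) /eqP.
  by rewrite !mxE !eqxx oner_eq0.
move=> v; rewrite /Defs.iota mulmx_suml /pairing rmorph_sum scaler_suml.
apply: eq_bigr => k _.
by rewrite -scalemxAl X_eigenvector scalerA mxE rmorphM mulrC.
Qed.

Lemma weight_eigenrowP a : weight X a -> exists j, a = eigenrow j.
Proof.
move=> [psi [psi_neq0 psi_eigen]].
pose phi := U *m psi.
have [j phi_j] : exists j, phi j 0 != 0.
  apply/existsP; apply: contraR psi_neq0 => /existsPn phi0; apply/eqP.
  have {}phi0 : phi = 0.
    by apply/matrixP => i z; rewrite ord1 [RHS]mxE; apply/eqP/negPn/phi0.
  by rewrite -(mul1mx psi) -(mulmx1C U_unitary) -mulmxA -/phi phi0 mulmx0.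
exists j; apply/rowP => k; rewrite mxE.
have := congr1 (fun M : 'cV_n => (U *m M) j 0) (psi_eigen (delta_mx 0 k)).
rewrite /= iota_delta_mx pairing_delta_mx X_diag !mulmxA U_unitary mul1mx.
rewrite -mulmxA -/phi -scalemxAr -/phi mul_diag_mx !mxE.
by move: phi_j; rewrite mxE => /mulIf phiK /phiK /complexI ->.
Qed.

Lemma iota_star_eigenbasis G :
  iota_star X G = \sum_j complex.Re ((U *m G *m adj U) j j) *: eigenrow j.
Proof.
apply/rowP => k; rewrite !mxE summxE X_diag !mulmxA mxtrace_mulC !mulmxA.
rewrite mxtrace_mul_diag raddf_sum; apply: eq_bigr => j _.
by rewrite !mxE; apply: Re_mul_real.
Qed.

Lemma density_operator_conv G :
  density_operator G -> conv (weight X) (iota_star X G).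
Proof.
move=> [_ [G_psd G_tr]]; pose M := U *m G *m adj U.
exists n, eigenrow, (fun j => complex.Re (M j j)).
split; first exact: weight_eigenrow.
split; [move=> j | split; last exact: iota_star_eigenbasis].
- have := G_psd (eigenvector j).
  rewrite /eigenvector adjM adjK adj_delta_mx !mulmxA.
  have -> : delta_mx 0 j *m U *m G *m adj U = delta_mx 0 j *m M :> 'rV_n.
    by rewrite /M !mulmxA.
  by rewrite delta_mx_quad lecE => /andP[].
- rewrite -raddf_sum -/(\tr M) /M mxtrace_mulC mulmxA (mulmx1C U_unitary).
  by rewrite mul1mx G_tr.
Qed.

Lemma conv_weight_eigenrow x :
  conv (weight X) x -> exists s : 'I_n -> R,
    [/\ forall j, 0 <= s j, \sum_j s j = 1 & x = \sum_j s j *: eigenrow j].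
Proof.
move=> [K [p [t [p_weight [t_ge0 [t_sum1 ->]]]]]].
have /fin_all_exists [f pE] := fun l => weight_eigenrowP (p_weight l).
exists (fun j => \sum_(l | f l == j) t l); split.
- by move=> j; apply: sumr_ge0 => l _.
- by rewrite -t_sum1 (partition_big f xpredT).
- rewrite (partition_big f xpredT) //=; apply: eq_bigr => j _.
  by rewrite scaler_suml; apply: eq_bigr => l /eqP <-; rewrite pE.
Qed.

Lemma eigenrow_conv_pure_state (s : 'I_n -> R) :
  (forall j, 0 <= s j) -> \sum_j s j = 1 ->
  exists P, pure_state P /\ iota_star X P = \sum_j s j *: eigenrow j.
Proof.
move=> s_ge0 s_sum1.
pose c : 'cV[R[i]]_n := \col_j (Num.sqrt (s j))%:C.
have c_norm j : c j 0 * conjc (c j 0) = (s j)%:C.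
  by rewrite mxE conjc_real -rmorphM -expr2 sqr_sqrtr.
have c1 : adj c *m c = 1%:M.
  apply/matrixP => a b; rewrite !ord1 [RHS]mxE eqxx mulr1n.
  rewrite -[1]/(1%:C) -s_sum1 rmorph_sum mxE.
  by apply: eq_bigr => j _; rewrite adj_mxE mulrC c_norm.
pose psi := adj U *m c.
have psi1 : adj psi *m psi = 1%:M.
  by rewrite adjM adjK !mulmxA -(mulmxA _ U) U_unitary mulmx1 c1.
exists (psi *m adj psi); split; first exact: unit_vector_pure_state.
rewrite iota_star_eigenbasis; apply: eq_bigr => j _.
rewrite adjM adjK !mulmxA U_unitary mul1mx -!mulmxA U_unitary mulmx1.
by rewrite mxE big_ord1 adj_mxE c_norm.
Qed.

End Weights.

Theorem theorem4p5 (R : rcfType) (m n : nat) (X : 'I_m -> 'M[R[i]]_n)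
  (W : 'M[R[i]]_n) :
  (forall k, is_hermitian (X k)) -> is_hermitian W -> abelian_theory X ->
  (forall x : 'rV[R]_m,
     (exists P, pure_state P /\ iota_star X P = x) <-> conv (weight X) x) /\
  (forall x : 'rV[R]_m,
     (exists G, density_operator G /\ iota_star X G = x) <-> conv (weight X) x).
Proof.
move=> Xh _ /abelian_theory_comm Xcomm.
have [U [lam [U_unitary X_diag]]] :=
  commuting_hermitian_codiagonalization Xh Xcomm.
have density_conv := density_operator_conv U_unitary X_diag.
have conv_pure x :
    conv (weight X) x -> exists P, pure_state P /\ iota_star X P = x.
  case/(conv_weight_eigenrow U_unitary X_diag) => s [s_ge0 s_sum1 ->].
  exact: eigenrow_conv_pure_state U_unitary X_diag _ s_ge0 s_sum1.
split => x; split.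
- by case=> P [/pure_state_density_operator P_density <-]; apply: density_conv.
- exact: conv_pure.
- by case=> G [G_density <-]; apply: density_conv.
- by case/conv_pure => P [/pure_state_density_operator P_density <-]; exists P.
Qed.
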